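(* Let $p,q\in\Bbbk^\times$. Then $D(q)\cong D(p)$ if and only if $p=q^{\pm1}$.
   Context: $\Bbbk$ is an algebraically closed field of characteristic zero. Paths are written left to right. Let $Q$ be the quiver with vertices $e_1,e_2$, arrows $a,c:e_1\to e_2$ and $b,d:e_2\to e_1$; for $q\in\Bbbk^\times$, $D(q)=\Bbbk Q/(ab-(a+c)d,\ ba-q\,dc)$. *)

From HB Require Import structures.
From mathcomp Require Import all_boot all_order all_algebra.
From mathcomp.multinomials Require Import monalg.

Set Implicit Arguments.
Unset Strict Implicit.
Unset Printing Implicit Defensive.

Import GRing.Theory.
Local Open Scope ring_scope.

(* The free associative K-algebra on the six letters e1, e2, a, b, c, d,
   encoded as the monoid algebra of the free monoid on 'I_6:
   0 = e1, 1 = e2, 2 = a, 3 = b, 4 = c, 5 = d. *)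
Definition FreeAlg (K : fieldType) := {malg K[{fmonom 'I_6}]}.

Definition gen (K : fieldType) (i : 'I_6) : FreeAlg K := << fmu i >>.

Definition ge1 K := @gen K (@Ordinal 6 0 isT).
Definition ge2 K := @gen K (@Ordinal 6 1 isT).
Definition ga  K := @gen K (@Ordinal 6 2 isT).
Definition gb  K := @gen K (@Ordinal 6 3 isT).
Definition gc  K := @gen K (@Ordinal 6 4 isT).
Definition gd  K := @gen K (@Ordinal 6 5 isT).

Definition in_ideal2 (R : nzRingType) (rs : seq R) (x : R) : Prop :=
  exists (n : nat) (u v : 'I_n -> R) (j : 'I_n -> 'I_(size rs)),
    x = \sum_(i < n) u i * rs`_(j i) * v i.

(* Relations presenting the path algebra kQ of the quiver Q
   (vertices e1, e2; arrows a, c : e1 -> e2 and b, d : e2 -> e1; paths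
   written left to right, so that e1 a = a = a e2, etc.) as a quotient of
   the free algebra. *)
Definition quiver_rels (K : fieldType) : seq (FreeAlg K) :=
  let e1 := ge1 K in let e2 := ge2 K in
  let a := ga K in let b := gb K in let c := gc K in let d := gd K in
  [:: e1 * e1 - e1; e2 * e2 - e2; e1 * e2; e2 * e1; e1 + e2 - 1;
      e1 * a - a; a * e2 - a; e1 * c - c; c * e2 - c;
      e2 * b - b; b * e1 - b; e2 * d - d; d * e1 - d].

Definition D_rels (K : fieldType) (q : K) : seq (FreeAlg K) :=
  quiver_rels K ++
  [:: ga K * gb K - (ga K + gc K) * gd K;
      gb K * ga K - q *: (gd K * gc K)].

Definition D_ideal (K : fieldType) (q : K) : FreeAlg K -> Prop :=
  in_ideal2 (D_rels q).

(* K-algebra isomorphism A/I ~= B/J between quotients of K-algebras by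
   (two-sided) ideals, written out on representatives: f represents a map
   A/I -> B/J which is well defined, K-linear, multiplicative, unital,
   injective and surjective. *)
Definition quot_alg_iso (K : fieldType) (A B : lalgType K)
    (I : A -> Prop) (J : B -> Prop) : Prop :=
  exists f : A -> B,
    [/\ (forall x y, I (x - y) -> J (f x - f y)),
         (forall x y, J (f (x + y) - (f x + f y))),
         (forall (k : K) x, J (f (k *: x) - k *: f x)),
         (forall x y, J (f (x * y) - f x * f y))
       & J (f 1 - 1)] /\
    (forall x y, J (f x - f y) -> I (x - y)) /\
    (forall y, exists x, J (f x - y)).

Definition D_iso (K : fieldType) (q p : K) : Prop :=
  quot_alg_iso (D_ideal q) (D_ideal p).

From HB Require Import structures.
From mathcomp Require Import all_boot all_order all_algebra.
From mathcomp.multinomials Require Import monalg.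
From mathcomp Require Import finmap ring.
Import GRing.Theory.
Local Open Scope ring_scope.

Set Implicit Arguments.
Unset Strict Implicit.
Unset Printing Implicit Defensive.

(* For t != 0 the substitution a |-> t a + (t - 1) c, b |-> t b, c |-> c,
   d |-> (t - 1) b + d maps the relations of D(t) to multiples of those of
   D(t^-1), and the same substitution for t^-1 inverts it; so D(q) ~= D(q^-1).
   Conversely, an isomorphism D(q) ~= D(p) yields a surjective algebra map
   from the free algebra onto the 12-dimensional algebra D(p)/J^3 killing the
   relations of D(q).  The images of e1, e2 are complementary idempotents, so
   they fix or exchange the two vertices (surjectivity excludes the degenerate
   cases), and the images of the arrows give invertible 2x2 matrices G on
   span(a, c) and H on span(b, d) carrying the two relations of D(q) to
   multiples l, m of those of D(p).  Comparing determinants and traces of the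
   two relation pencils gives l^2 = det G det H, p m^2 = q det G det H and
   (p + 1) l m = (q + 1) det G det H (up to exchanging roles when the vertices
   are exchanged), hence q (p + 1)^2 = p (q + 1)^2, i.e. (p - q)(p q - 1) = 0. *)

(** * Ideals and morphisms of the free algebra *)

Section TwoSidedIdeal.
Variables (R : nzRingType) (rs : seq R).
Local Notation I := (in_ideal2 rs).

Lemma in_ideal0 : I 0.
Proof.
exists 0%N, (fun _ => 0), (fun _ => 0).
by exists (fun i : 'I_0 => False_rect _ (notF (ltn_ord i))); rewrite big_ord0.
Qed.

Lemma in_idealD x y : I x -> I y -> I (x + y).
Proof.
move=> [n1 [u1 [v1 [j1 ->]]]] [n2 [u2 [v2 [j2 ->]]]].
pose glue T (f1 : 'I_n1 -> T) (f2 : 'I_n2 -> T) (i : 'I_(n1 + n2)) :=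
  match split i with inl i1 => f1 i1 | inr i2 => f2 i2 end.
exists (n1 + n2)%N, (glue _ u1 u2), (glue _ v1 v2), (glue _ j1 j2).
rewrite big_split_ord /glue; congr (_ + _); apply: eq_bigr => i _.
  by rewrite -[lshift _ _]/(unsplit (inl i)) unsplitK.
by rewrite -[rshift _ _]/(unsplit (inr i)) unsplitK.
Qed.

Lemma in_idealMlr a b x : I x -> I (a * x * b).
Proof.
move=> [n [u [v [j ->]]]]; exists n, (fun i => a * u i), (fun i => v i * b), j.
by rewrite mulr_sumr mulr_suml; apply: eq_bigr => i _; rewrite !mulrA.
Qed.

Lemma in_ideal_rel k : (k < size rs)%N -> I rs`_k.
Proof.
move=> lt_k; exists 1%N, (fun _ => 1), (fun _ => 1), (fun _ => Ordinal lt_k).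
by rewrite big_ord1 mul1r mulr1.
Qed.

End TwoSidedIdeal.

Lemma in_ideal_nil (R : nzRingType) (x : R) : in_ideal2 [::] x -> x = 0.
Proof. by move=> [n [u [v [j ->]]]]; apply: big1 => i; case: (j i). Qed.

Lemma in_ideal_morph (R S : nzRingType) (rs : seq R) (ss : seq S) (f : R -> S) :
    {morph f : x y / x + y} -> {morph f : x y / x * y} ->
    (forall k, (k < size rs)%N -> in_ideal2 ss (f rs`_k)) ->
  forall x, in_ideal2 rs x -> in_ideal2 ss (f x).
Proof.
move=> fD fM frs _ [n [u [v [j ->]]]].
have f0 : f 0 = 0 by apply: (addrI (f 0)); rewrite -fD !addr0.
rewrite (big_morph f fD f0); elim/big_rec: _ => [|i y _ Iy].
  exact: in_ideal0.
by apply: in_idealD Iy; rewrite !fM; apply/in_idealMlr/frs.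
Qed.

Section FreeAlgebraMorphisms.
Variable K : fieldType.
Local Notation F := (FreeAlg K).

Lemma FreeAlg_scalerAr (k : K) (x y : F) : x * (k *: y) = k *: (x * y).
Proof.
have malgCr (g : F) : g * k%:MP = k *: g.
  rewrite malgM_def fgmulgU malgZ_def /fgscale; apply: eq_bigr => w _.
  by rewrite mulm1 mulrC.
by rewrite -!mul_malgC !mulrA malgCr mul_malgC.
Qed.

Definition alg_morph (R : lalgType K) (h : F -> R) : Prop :=
  [/\ {morph h : x y / x + y}, scalable h, {morph h : x y / x * y} & h 1 = 1].

Definition twisted_der (R : lalgType K) (s1 s2 : R -> K) (phi : R -> K) : Prop :=
  [/\ {morph phi : x y / x + y}, (forall k x, phi (k *: x) = k * phi x),
      (forall x y, phi (x * y) = s1 x * phi y + phi x * s2 y) & phi 1 = 0].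

Lemma word_prod (w : {fmonom 'I_6}) :
  (<< w >> : F) = \prod_(i <- (w : seq 'I_6)) gen K i.
Proof.
case: w => s; elim: s => [|i s IH] /=; first by rewrite big_nil -fmoneE.
rewrite big_cons -IH /gen malgM_def fgmulUU mulr1.
by congr << _ *g _ >>; apply/eqP; rewrite fmP fmM fmU.
Qed.

Lemma gen_ind (P : F -> Prop) :
  P (ge1 K) -> P (ge2 K) -> P (ga K) -> P (gb K) -> P (gc K) -> P (gd K) ->
  forall i, P (gen K i).
Proof.
move=> P1 P2 Pa Pb Pc Pd [[|[|[|[|[|[|m]]]]]] lt_i];
  last by exfalso; rewrite !ltnS ltn0 in lt_i.
all: rewrite (bool_irrelevance lt_i isT).
- exact: P1.
- exact: P2.
- exact: Pa.
- exact: Pb.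
- exact: Pc.
- exact: Pd.
Qed.

Section AlgMorph.
Variables (R : lalgType K) (h : F -> R).
Hypothesis hh : alg_morph h.

Lemma alg_morph0 : h 0 = 0.
Proof. by case: hh => hD _ _ _; apply: (addrI (h 0)); rewrite -hD !addr0. Qed.

Lemma alg_morphB x y : h (x - y) = h x - h y.
Proof.
case: hh => hD _ _ _; apply: (addIr (h y)).
by rewrite -hD !subrK.
Qed.

Lemma alg_morph_expand x :
  h x = \sum_(w <- msupp x) x@_w *: \prod_(i <- (w : seq 'I_6)) h (gen K i).
Proof.
case: hh => hD hZ hM h1; rewrite {1}[x]monalgE (big_morph h hD alg_morph0).
apply: eq_bigr => w _; rewrite -(big_morph h hM h1) -word_prod -hZ.
by congr (h _); apply/malgP => w'; rewrite mcoeffZ !mcoeffU mulr_natr.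
Qed.

End AlgMorph.

Lemma alg_morph_eq (R : lalgType K) (h h' : F -> R) :
    alg_morph h -> alg_morph h' -> (forall i, h (gen K i) = h' (gen K i)) ->
  h =1 h'.
Proof.
move=> hh hh' eq_gen x; rewrite (alg_morph_expand hh) (alg_morph_expand hh').
by apply: eq_bigr => w _; congr (_ *: _); apply: eq_bigr.
Qed.

Lemma alg_morph_twisted_der (R : lalgType K) (h : F -> R) (s1 s2 phi : R -> K) :
    alg_morph h -> twisted_der s1 s2 phi ->
    (forall i, phi (h (gen K i)) = 0) ->
  forall x, phi (h x) = 0.
Proof.
move=> hh [pD pZ pM p1] phi_gen x.
have p0 : phi 0 = 0 by apply: (addrI (phi 0)); rewrite -pD !addr0.
rewrite (alg_morph_expand hh) (big_morph phi pD p0) big1 // => w _.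
rewrite pZ; suff -> : phi (\prod_(i <- (w : seq 'I_6)) h (gen K i)) = 0.
  by rewrite mulr0.
elim: (w : seq _) => [|i s IH]; first by rewrite big_nil.
by rewrite big_cons pM IH phi_gen mulr0 mul0r addr0.
Qed.

Section FreeLift.
Variables (R : lalgType K) (g : 'I_6 -> R).
Hypothesis R_scalerAr : forall k (x y : R), x * (k *: y) = k *: (x * y).

Definition word_eval (w : {fmonom 'I_6}) : R := \prod_(i <- (w : seq 'I_6)) g i.

Lemma word_eval_mmorphism : mmorphism word_eval.
Proof. by split=> [x y|]; rewrite /word_eval ?fmM ?big_cat // fm1 big_nil. Qed.

HB.instance Definition _ := isMultiplicative.Build _ _ word_eval word_eval_mmorphism.

Definition free_lift (x : F) : R := mmap (in_alg R) word_eval x.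

Lemma free_lift_alg_morph : alg_morph free_lift.
Proof.
have comm_scalar (k : K) (x : R) : GRing.comm k%:A x.
  by rewrite /GRing.comm mulr_algl R_scalerAr mulr1.
have [lM l1] := @commr_mmap_is_multiplicative _ _ _ (in_alg R) word_eval
  (fun _ _ _ => comm_scalar _ _).
split=> //; first exact: mmapD.
by move=> k x; rewrite /free_lift mmapZ mulr_algl.
Qed.

Lemma free_lift_gen i : free_lift (gen K i) = g i.
Proof. by rewrite /free_lift /gen mmapU /word_eval fmU big_seq1 /= scale1r mul1r. Qed.

End FreeLift.
End FreeAlgebraMorphisms.

Lemma in_idealZ (K : fieldType) (V : lalgType K) (rs : seq V) k x :
  in_ideal2 rs x -> in_ideal2 rs (k *: x).
Proof. by move=> Ix; rewrite -mulr_algl -[_ * x]mulr1; apply: in_idealMlr. Qed.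

Section LinearCombinations.
Variables (K : fieldType) (V : lalgType K).
Hypothesis V_scalerAr : forall k (x y : V), x * (k *: y) = k *: (x * y).

Definition lcomb2 (k1 k2 : K) (x y : V) := k1 *: x + k2 *: y.

Definition lcomb4 (k1 k2 k3 k4 : K) (x1 x2 x3 x4 : V) :=
  k1 *: x1 + k2 *: x2 + k3 *: x3 + k4 *: x4.

Lemma lcomb2D k1 k2 m1 m2 x y :
  lcomb2 k1 k2 x y + lcomb2 m1 m2 x y = lcomb2 (k1 + m1) (k2 + m2) x y.
Proof. by rewrite /lcomb2 addrACA -!scalerDl. Qed.

Lemma lcomb2_comp k1 k2 m1 m2 n1 n2 x y :
  lcomb2 k1 k2 (lcomb2 m1 m2 x y) (lcomb2 n1 n2 x y) =
  lcomb2 (k1 * m1 + k2 * n1) (k1 * m2 + k2 * n2) x y.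
Proof. by rewrite /lcomb2 !scalerDr !scalerA addrACA -!scalerDl. Qed.

Lemma lcomb2_mulr e k1 k2 x y :
  e * lcomb2 k1 k2 x y - lcomb2 k1 k2 x y = lcomb2 k1 k2 (e * x - x) (e * y - y).
Proof. by rewrite /lcomb2 mulrDr !V_scalerAr opprD addrACA !scalerBr. Qed.

Lemma lcomb2_mull e k1 k2 x y :
  lcomb2 k1 k2 x y * e - lcomb2 k1 k2 x y = lcomb2 k1 k2 (x * e - x) (y * e - y).
Proof. by rewrite /lcomb2 mulrDl -!scalerAl opprD addrACA !scalerBr. Qed.

Lemma mul_lcomb2 k1 k2 m1 m2 x1 x2 y1 y2 :
  lcomb2 k1 k2 x1 x2 * lcomb2 m1 m2 y1 y2 =
  lcomb4 (k1 * m1) (k1 * m2) (k2 * m1) (k2 * m2)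
         (x1 * y1) (x1 * y2) (x2 * y1) (x2 * y2).
Proof.
by rewrite /lcomb2 /lcomb4 mulrDl !mulrDr -!scalerAl !V_scalerAr !scalerA !addrA.
Qed.

Lemma lcomb4B k1 k2 k3 k4 m1 m2 m3 m4 x1 x2 x3 x4 :
  lcomb4 k1 k2 k3 k4 x1 x2 x3 x4 - lcomb4 m1 m2 m3 m4 x1 x2 x3 x4 =
  lcomb4 (k1 - m1) (k2 - m2) (k3 - m3) (k4 - m4) x1 x2 x3 x4.
Proof.
rewrite /lcomb4 !scalerBl opprD addrACA; congr (_ + _).
by rewrite opprD addrACA; congr (_ + _); rewrite opprD addrACA.
Qed.

Lemma lcomb4Z s k1 k2 k3 k4 x1 x2 x3 x4 :
  s *: lcomb4 k1 k2 k3 k4 x1 x2 x3 x4 =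
  lcomb4 (s * k1) (s * k2) (s * k3) (s * k4) x1 x2 x3 x4.
Proof. by rewrite /lcomb4 !scalerDr !scalerA. Qed.

Lemma lcomb2_10 k1 k2 x y : k1 = 1 -> k2 = 0 -> lcomb2 k1 k2 x y = x.
Proof. by move=> -> ->; rewrite /lcomb2 scale1r scale0r addr0. Qed.

Lemma lcomb2_01 k1 k2 x y : k1 = 0 -> k2 = 1 -> lcomb2 k1 k2 x y = y.
Proof. by move=> -> ->; rewrite /lcomb2 scale1r scale0r add0r. Qed.

Lemma lcomb2_relab t a b c d :
  lcomb2 t (t - 1) a c * lcomb2 t 0 b d -
    (lcomb2 t (t - 1) a c + lcomb2 0 1 a c) * lcomb2 (t - 1) 1 b d =
  t *: (a * b - (a + c) * d).
Proof.
rewrite lcomb2D !mul_lcomb2 lcomb4B.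
have -> : a * b - (a + c) * d = lcomb4 1 (-1) 0 (-1) (a * b) (a * d) (c * b) (c * d).
  by rewrite /lcomb4 scale0r addr0 !scaleN1r !scale1r mulrDl opprD addrA.
by rewrite lcomb4Z; congr lcomb4; ring.
Qed.

Lemma lcomb2_relba t a b c d : t != 0 ->
  lcomb2 t 0 b d * lcomb2 t (t - 1) a c -
    t *: (lcomb2 (t - 1) 1 b d * lcomb2 0 1 a c) =
  t ^+ 2 *: (b * a - t^-1 *: (d * c)).
Proof.
move=> t0; rewrite !mul_lcomb2 lcomb4Z lcomb4B.
have -> : b * a - t^-1 *: (d * c) =
    lcomb4 1 0 0 (- t^-1) (b * a) (b * c) (d * a) (d * c).
  by rewrite /lcomb4 !scale0r !addr0 scale1r scaleNr.
by rewrite lcomb4Z; congr lcomb4; field.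
Qed.

End LinearCombinations.

Lemma in_ideal_lcomb2 (K : fieldType) (V : lalgType K) (rs : seq V) k1 k2 x y :
  in_ideal2 rs x -> in_ideal2 rs y -> in_ideal2 rs (lcomb2 k1 k2 x y).
Proof. by move=> Ix Iy; apply: in_idealD; apply: in_idealZ. Qed.

Section FreeAlgebraIso.
Variable K : fieldType.
Local Notation F := (FreeAlg K).

Lemma alg_morph_id : alg_morph (@id F).
Proof. by split. Qed.

Lemma alg_morph_comp (R : lalgType K) (h : F -> R) (f : F -> F) :
  alg_morph h -> alg_morph f -> alg_morph (h \o f).
Proof.
move=> [hD hZ hM h1] [fD fZ fM f1].
by split=> [x y|k x|x y|] /=; rewrite ?fD ?hD ?fZ ?hZ ?fM ?hM ?f1.
Qed.

Lemma alg_morph_lcomb2 (R : lalgType K) (h : F -> R) k1 k2 x y :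
  alg_morph h -> h (lcomb2 k1 k2 x y) = lcomb2 k1 k2 (h x) (h y).
Proof. by case=> hD hZ _ _; rewrite /lcomb2 hD; congr (_ + _); apply: hZ. Qed.

Section AlgMorphRelations.
Variables (R : lalgType K) (h : F -> R).
Hypothesis hh : alg_morph h.

Lemma alg_morph_mulB x y z : h (x * y - z) = h x * h y - h z.
Proof. by have [_ _ hM _] := hh; rewrite -hM -(alg_morphB hh). Qed.

Lemma alg_morph_addB1 x y : h (x + y - 1) = h x + h y - 1.
Proof. by have [hD _ _ h1] := hh; rewrite -h1 -hD -(alg_morphB hh). Qed.

Lemma alg_morph_relab x y z w :
  h (x * y - (x + z) * w) = h x * h y - (h x + h z) * h w.
Proof. by have [hD _ hM _] := hh; rewrite -hD -!hM -(alg_morphB hh). Qed.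

Lemma alg_morph_relba s x y z w :
  h (y * x - s *: (w * z)) = h y * h x - s *: (h w * h z).
Proof.
by have [_ hZ hM _] := hh; rewrite -!hM -hZ -(alg_morphB hh).
Qed.

End AlgMorphRelations.

Lemma quot_alg_iso_inverse (I J : F -> Prop) (f g : F -> F) :
    alg_morph f -> alg_morph g -> cancel f g -> cancel g f ->
    (forall x, I x -> J (f x)) -> (forall x, J x -> I (g x)) -> J 0 ->
  quot_alg_iso I J.
Proof.
move=> hf hg fK gK fIJ gJI J0; have [fD fZ fM f1] := hf.
exists f; split; [split | split].
- by move=> x y /fIJ; rewrite (alg_morphB hf).
- by move=> x y; rewrite fD subrr.
- by move=> k x; rewrite fZ subrr.
- by move=> x y; rewrite fM subrr.
- by rewrite f1 subrr.
- by move=> x y /gJI; rewrite (alg_morphB hg) !fK.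
- by move=> y; exists (g y); rewrite gK subrr.
Qed.

End FreeAlgebraIso.

(** * The isomorphism D(q) ~= D(q^-1) *)

Section SwapIsomorphism.
Variable K : fieldType.
Local Notation F := (FreeAlg K).

Definition swap_img (t : K) (i : 'I_6) : F :=
  match nat_of_ord i with
  | 0 => ge1 K
  | 1 => ge2 K
  | 2 => lcomb2 t (t - 1) (ga K) (gc K)
  | 3 => lcomb2 t 0 (gb K) (gd K)
  | 4 => lcomb2 0 1 (ga K) (gc K)
  | _ => lcomb2 (t - 1) 1 (gb K) (gd K)
  end.

Definition swap t : F -> F := free_lift (swap_img t).

Lemma swap_alg_morph t : alg_morph (swap t).
Proof. exact/free_lift_alg_morph/FreeAlg_scalerAr. Qed.

Lemma swap_e1 t : swap t (ge1 K) = ge1 K. Proof. exact: free_lift_gen. Qed.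
Lemma swap_e2 t : swap t (ge2 K) = ge2 K. Proof. exact: free_lift_gen. Qed.
Lemma swap_a t : swap t (ga K) = lcomb2 t (t - 1) (ga K) (gc K).
Proof. exact: free_lift_gen. Qed.
Lemma swap_b t : swap t (gb K) = lcomb2 t 0 (gb K) (gd K).
Proof. exact: free_lift_gen. Qed.
Lemma swap_c t : swap t (gc K) = lcomb2 0 1 (ga K) (gc K).
Proof. exact: free_lift_gen. Qed.
Lemma swap_d t : swap t (gd K) = lcomb2 (t - 1) 1 (gb K) (gd K).
Proof. exact: free_lift_gen. Qed.

Lemma swapK t : t != 0 -> cancel (swap t) (swap t^-1).
Proof.
move=> t0; have sM := swap_alg_morph.
apply: (alg_morph_eq (alg_morph_comp (sM t^-1) (sM t)) (@alg_morph_id K)).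
apply: (gen_ind (P := fun x => swap t^-1 (swap t x) = x)).
- by rewrite !swap_e1.
- by rewrite !swap_e2.
- rewrite swap_a alg_morph_lcomb2 // swap_a swap_c lcomb2_comp.
  by rewrite lcomb2_10 //; field.
- rewrite swap_b alg_morph_lcomb2 // swap_b swap_d lcomb2_comp.
  by rewrite lcomb2_10 //; field.
- rewrite swap_c alg_morph_lcomb2 // swap_a swap_c lcomb2_comp.
  by rewrite lcomb2_01 //; field.
- rewrite swap_d alg_morph_lcomb2 // swap_b swap_d lcomb2_comp.
  by rewrite lcomb2_01 //; field.
Qed.

Lemma swap_rel (t : K) k : t != 0 -> (k < size (D_rels t))%N ->
  D_ideal t^-1 (swap t (D_rels t)`_k).
Proof.
move=> t0; have sM := swap_alg_morph t; have [_ _ sMul _] := sM.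
have rel k' : (k' < 15)%N -> D_ideal t^-1 (D_rels t^-1)`_k' :=
  @in_ideal_rel _ (D_rels t^-1) k'.
have lcomb_rel k1 k2 k3 k4 x y : (k3 < 15)%N -> (k4 < 15)%N ->
    x = (D_rels t^-1)`_k3 -> y = (D_rels t^-1)`_k4 ->
    D_ideal t^-1 (lcomb2 k1 k2 x y).
  by move=> lt3 lt4 -> ->; apply: in_ideal_lcomb2; apply: rel.
have mulB := alg_morph_mulB sM.
have scalerAr := @FreeAlg_scalerAr K; have lcomb_mulr := lcomb2_mulr scalerAr.
case: k => [|[|[|[|[|[|[|[|[|[|[|[|[|[|[|//]]]]]]]]]]]]]]] _.
- by rewrite mulB swap_e1; exact: (rel 0%N).
- by rewrite mulB swap_e2; exact: (rel 1%N).
- by rewrite [swap t _]sMul swap_e1 swap_e2; exact: (rel 2%N).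
- by rewrite [swap t _]sMul swap_e1 swap_e2; exact: (rel 3%N).
- by rewrite (alg_morph_addB1 sM) swap_e1 swap_e2; exact: (rel 4%N).
- by rewrite mulB swap_e1 swap_a lcomb_mulr; apply: (lcomb_rel _ _ 5%N 7%N).
- by rewrite mulB swap_e2 swap_a lcomb2_mull; apply: (lcomb_rel _ _ 6%N 8%N).
- by rewrite mulB swap_e1 swap_c lcomb_mulr; apply: (lcomb_rel _ _ 5%N 7%N).
- by rewrite mulB swap_e2 swap_c lcomb2_mull; apply: (lcomb_rel _ _ 6%N 8%N).
- by rewrite mulB swap_e2 swap_b lcomb_mulr; apply: (lcomb_rel _ _ 9%N 11%N).
- by rewrite mulB swap_e1 swap_b lcomb2_mull; apply: (lcomb_rel _ _ 10%N 12%N).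
- by rewrite mulB swap_e2 swap_d lcomb_mulr; apply: (lcomb_rel _ _ 9%N 11%N).
- by rewrite mulB swap_e1 swap_d lcomb2_mull; apply: (lcomb_rel _ _ 10%N 12%N).
- rewrite (alg_morph_relab sM) swap_a swap_b swap_c swap_d.
  by rewrite (lcomb2_relab scalerAr); exact/in_idealZ/(rel 13%N).
- rewrite (alg_morph_relba sM) swap_a swap_b swap_c swap_d.
  by rewrite (lcomb2_relba scalerAr) //; exact/in_idealZ/(rel 14%N).
Qed.

Lemma swap_D_ideal (t : K) x : t != 0 -> D_ideal t x -> D_ideal t^-1 (swap t x).
Proof.
move=> t0; have [sD _ sM _] := swap_alg_morph t.
by apply: in_ideal_morph => // k; apply: swap_rel.
Qed.

Lemma D_iso_refl (q : K) : D_iso q q.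
Proof.
apply: (quot_alg_iso_inverse (@alg_morph_id K) (@alg_morph_id K)) => //.
exact: in_ideal0.
Qed.

Lemma D_iso_inv (q : K) : q != 0 -> D_iso q q^-1.
Proof.
move=> q0; have q'0 : q^-1 != 0 by rewrite invr_eq0.
apply: (quot_alg_iso_inverse (swap_alg_morph q) (swap_alg_morph q^-1)).
- exact: swapK.
- by rewrite -{2}[q]invrK; apply: swapK.
- by move=> x; apply: swap_D_ideal.
- by move=> x /(swap_D_ideal q'0); rewrite invrK.
- exact: in_ideal0.
Qed.

End SwapIsomorphism.

(** * The truncation D(p)/J^3 *)

(* Coordinates in the basis e1, e2, a, c, b, d, ab, cb, cd, bc, da, dc of
   D(p)/J^3, where ad = ab - cd and ba = p dc. *)
Record trunc (K : Type) := Trunc {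
  x_e1 : K; x_e2 : K; x_a : K; x_c : K; x_b : K; x_d : K;
  x_ab : K; x_cb : K; x_cd : K; x_bc : K; x_da : K; x_dc : K }.

Definition Dtrunc (K : fieldType) (p : K) := trunc K.

Section TruncOperations.
Variables (K : fieldType) (p : K).
Local Notation T := (Dtrunc p).

Definition zero_tr : T := Trunc 0 0 0 0 0 0 0 0 0 0 0 0.
Definition one_tr : T := Trunc 1 1 0 0 0 0 0 0 0 0 0 0.

Definition add_tr (x y : T) : T :=
  Trunc (x_e1 x + x_e1 y) (x_e2 x + x_e2 y) (x_a x + x_a y) (x_c x + x_c y)
    (x_b x + x_b y) (x_d x + x_d y) (x_ab x + x_ab y) (x_cb x + x_cb y)
    (x_cd x + x_cd y) (x_bc x + x_bc y) (x_da x + x_da y) (x_dc x + x_dc y).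

Definition scale_tr (k : K) (x : T) : T :=
  Trunc (k * x_e1 x) (k * x_e2 x) (k * x_a x) (k * x_c x) (k * x_b x)
    (k * x_d x) (k * x_ab x) (k * x_cb x) (k * x_cd x) (k * x_bc x)
    (k * x_da x) (k * x_dc x).

Definition opp_tr (x : T) : T := scale_tr (-1) x.

Definition mul_tr (x y : T) : T :=
  Trunc (x_e1 x * x_e1 y) (x_e2 x * x_e2 y)
    (x_e1 x * x_a y + x_a x * x_e2 y) (x_e1 x * x_c y + x_c x * x_e2 y)
    (x_e2 x * x_b y + x_b x * x_e1 y) (x_e2 x * x_d y + x_d x * x_e1 y)
    (x_e1 x * x_ab y + x_ab x * x_e1 y + x_a x * x_b y + x_a x * x_d y)
    (x_e1 x * x_cb y + x_cb x * x_e1 y + x_c x * x_b y)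
    (x_e1 x * x_cd y + x_cd x * x_e1 y + x_c x * x_d y - x_a x * x_d y)
    (x_e2 x * x_bc y + x_bc x * x_e2 y + x_b x * x_c y)
    (x_e2 x * x_da y + x_da x * x_e2 y + x_d x * x_a y)
    (x_e2 x * x_dc y + x_dc x * x_e2 y + p * (x_b x * x_a y) + x_d x * x_c y).

End TruncOperations.

Arguments zero_tr {K} p.
Arguments one_tr {K} p.
Arguments add_tr {K} p.
Arguments scale_tr {K} p.
Arguments opp_tr {K} p.
Arguments mul_tr {K} p.

Ltac trunc_intros :=
  do ?[let x := fresh in move=> x; try case: x => ? ? ? ? ? ? ? ? ? ? ? ?].

Ltac trunc_ring :=
  trunc_intros;
  cbv [add_tr opp_tr scale_tr mul_tr zero_tr one_tr
       x_e1 x_e2 x_a x_c x_b x_d x_ab x_cb x_cd x_bc x_da x_dc];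
  try congr Trunc; ring.

Section TruncatedAlgebra.
Variables (K : fieldType) (p : K).
Local Notation T := (Dtrunc p).

Definition trunc_tuple (x : T) :=
  (x_e1 x, x_e2 x, x_a x, x_c x, x_b x, x_d x,
   (x_ab x, x_cb x, x_cd x, x_bc x, x_da x, x_dc x)).

Definition tuple_trunc (s : K * K * K * K * K * K * (K * K * K * K * K * K)) : T :=
  let: (k1, k2, k3, k4, k5, k6, (k7, k8, k9, k10, k11, k12)) := s in
  Trunc k1 k2 k3 k4 k5 k6 k7 k8 k9 k10 k11 k12.

Lemma trunc_tupleK : cancel trunc_tuple tuple_trunc. Proof. by case. Qed.

HB.instance Definition _ := Choice.copy T (can_type trunc_tupleK).

Lemma add_trA : associative (add_tr p). Proof. by trunc_ring. Qed.
Lemma add_trC : commutative (add_tr p). Proof. by trunc_ring. Qed.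
Lemma add_0tr : left_id (zero_tr p) (add_tr p). Proof. by trunc_ring. Qed.
Lemma add_Ntr : left_inverse (zero_tr p) (opp_tr p) (add_tr p).
Proof. by trunc_ring. Qed.
Lemma mul_trA : associative (mul_tr p). Proof. by trunc_ring. Qed.
Lemma mul_1tr : left_id (one_tr p) (mul_tr p). Proof. by trunc_ring. Qed.
Lemma mul_tr1 : right_id (one_tr p) (mul_tr p). Proof. by trunc_ring. Qed.
Lemma mul_trDl : left_distributive (mul_tr p) (add_tr p).
Proof. by trunc_ring. Qed.
Lemma mul_trDr : right_distributive (mul_tr p) (add_tr p).
Proof. by trunc_ring. Qed.
Lemma one_tr_neq0 : one_tr p != zero_tr p.
Proof. by apply/eqP => -[/eqP]; rewrite oner_eq0. Qed.

HB.instance Definition _ := GRing.isNzRing.Build T add_trA add_trC add_0tr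
  add_Ntr mul_trA mul_1tr mul_tr1 mul_trDl mul_trDr one_tr_neq0.

Lemma scale_trA a b x : scale_tr p a (scale_tr p b x) = scale_tr p (a * b) x.
Proof. by move: x; trunc_ring. Qed.
Lemma scale_1tr : left_id 1 (scale_tr p). Proof. by trunc_ring. Qed.
Lemma scale_trDr a : {morph scale_tr p a : x y / add_tr p x y}.
Proof. by move: a; trunc_ring. Qed.
Lemma scale_trDl x : {morph scale_tr p^~ x : a b / a + b >-> add_tr p a b}.
Proof. by move: x; trunc_ring. Qed.

HB.instance Definition _ :=
  GRing.Zmodule_isLmodule.Build K T scale_trA scale_1tr scale_trDr scale_trDl.

Lemma add_trE (x y : T) : x + y = add_tr p x y. Proof. by []. Qed.
Lemma opp_trE (x : T) : - x = opp_tr p x. Proof. by []. Qed.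
Lemma mul_trE (x y : T) : x * y = mul_tr p x y. Proof. by []. Qed.
Lemma scale_trE k (x : T) : k *: x = scale_tr p k x. Proof. by []. Qed.
Lemma one_trE : 1 = one_tr p :> T. Proof. by []. Qed.
Lemma zero_trE : 0 = zero_tr p :> T. Proof. by []. Qed.

Lemma scale_trAl k (x y : T) :
  scale_tr p k (mul_tr p x y) = mul_tr p (scale_tr p k x) y.
Proof. by move: k x y; trunc_ring. Qed.

HB.instance Definition _ := GRing.Lmodule_isLalgebra.Build K T scale_trAl.

Lemma Dtrunc_scalerAr k (x y : T) : x * (k *: y) = k *: (x * y).
Proof. by rewrite !(mul_trE, scale_trE); move: k x y; trunc_ring. Qed.

End TruncatedAlgebra.

Ltac trunc_eval :=
  trunc_intros;
  rewrite ?(add_trE, opp_trE, mul_trE, scale_trE, one_trE, zero_trE); trunc_ring.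

Section Projection.
Variables (K : fieldType) (p : K).
Local Notation T := (Dtrunc p).

Definition trunc_gen (i : 'I_6) : T :=
  match nat_of_ord i with
  | 0 => Trunc 1 0 0 0 0 0 0 0 0 0 0 0
  | 1 => Trunc 0 1 0 0 0 0 0 0 0 0 0 0
  | 2 => Trunc 0 0 1 0 0 0 0 0 0 0 0 0
  | 3 => Trunc 0 0 0 0 1 0 0 0 0 0 0 0
  | 4 => Trunc 0 0 0 1 0 0 0 0 0 0 0 0
  | _ => Trunc 0 0 0 0 0 1 0 0 0 0 0 0
  end.

Definition trunc_proj : FreeAlg K -> T := free_lift trunc_gen.

Lemma trunc_proj_alg_morph : alg_morph trunc_proj.
Proof. exact/free_lift_alg_morph/Dtrunc_scalerAr. Qed.

Lemma trunc_proj_gen i : trunc_proj (gen K i) = trunc_gen i.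
Proof. exact: free_lift_gen. Qed.

Lemma trunc_proj_rel k : (k < size (D_rels p))%N -> trunc_proj (D_rels p)`_k = 0.
Proof.
have pM := trunc_proj_alg_morph; have [_ _ pMul _] := pM.
have mulB := alg_morph_mulB pM.
case: k => [|[|[|[|[|[|[|[|[|[|[|[|[|[|[|//]]]]]]]]]]]]]]] _.
all: [> rewrite mulB | rewrite mulB | rewrite pMul | rewrite pMul
     | rewrite (alg_morph_addB1 pM) | rewrite mulB | rewrite mulB | rewrite mulB
     | rewrite mulB | rewrite mulB | rewrite mulB | rewrite mulB | rewrite mulB
     | rewrite (alg_morph_relab pM) | rewrite (alg_morph_relba pM) ].
all: by rewrite !trunc_proj_gen; cbv [trunc_gen nat_of_ord]; trunc_eval.
Qed.

End Projection.

Lemma trunc_proj_D_ideal (K : fieldType) (p : K) x :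
  D_ideal p x -> trunc_proj p x = 0.
Proof.
have [pD _ pM _] := trunc_proj_alg_morph p.
move=> Ix; apply: in_ideal_nil; apply: (in_ideal_morph pD pM _ Ix) => k lt_k.
by rewrite trunc_proj_rel //; apply: in_ideal0.
Qed.

(** * Rigidity of surjections onto D(p)/J^3 *)

Section ScalarIdentities.
Variable K : fieldType.
Implicit Types p q : K.

Lemma idemf01 (x : K) : x * x = x -> x = 0 \/ x = 1.
Proof.
move=> xx; have : x * (x - 1) == 0 by rewrite mulrBr mulr1 xx subrr.
by rewrite mulf_eq0 subr_eq0 => /orP[] /eqP; [left | right].
Qed.

Lemma det2_neq0 (x1 y1 x2 y2 : K) :
    (forall u v, u * x1 + v * y1 = 0 -> u * x2 + v * y2 = 0 -> u = 0 /\ v = 0) ->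
  x1 * y2 - y1 * x2 != 0.
Proof.
move=> indep; apply/eqP => det0.
have [_ /eqP] : y1 = 0 /\ - x1 = 0.
  by apply: indep; [ring | rewrite -oppr0 -det0; ring].
have [_ /eqP] : y2 = 0 /\ - x2 = 0.
  by apply: indep; [rewrite -det0; ring | ring].
rewrite !oppr_eq0 => /eqP x2_0 /eqP x1_0.
have [] : (1 : K) = 0 /\ (0 : K) = 0.
  by apply: indep; rewrite ?x1_0 ?x2_0; ring.
by move/eqP; rewrite oner_eq0.
Qed.

Lemma eq_or_inv_of_invariant p q : p != 0 -> q != 0 ->
  q * (p + 1) ^+ 2 = p * (q + 1) ^+ 2 -> p = q \/ p = q^-1.
Proof.
move=> p0 q0 inv.
have : (p - q) * (p * q - 1) = q * (p + 1) ^+ 2 - p * (q + 1) ^+ 2 by ring.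
rewrite inv subrr => /eqP; rewrite mulf_eq0 !subr_eq0 => /orP[/eqP -> | /eqP pq1].
  by left.
by right; rewrite -[p](mulfK q0) pq1 mul1r.
Qed.

Lemma pq_of_invariants p q (l m D : K) : p != 0 -> q != 0 -> D != 0 ->
  (l ^+ 2 = D /\ p * m ^+ 2 = q * D \/ p * l ^+ 2 = D /\ m ^+ 2 = q * D) ->
  (p + 1) * l * m = (q + 1) * D -> p = q \/ p = q^-1.
Proof.
move=> p0 q0 D0 sq lm; apply: eq_or_inv_of_invariant => //.
apply: (mulfI (expf_neq0 2 D0)).
have -> : D ^+ 2 * (q * (p + 1) ^+ 2) = (p + 1) ^+ 2 * (D * (q * D)) by ring.
have -> : D ^+ 2 * (p * (q + 1) ^+ 2) = p * ((q + 1) * D) ^+ 2 by ring.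
by rewrite -lm; case: sq => -[<- <-]; ring.
Qed.

(* [xy] is the coefficient of the arrow y in the image of the arrow x, and the
   six equations are the coordinates (on ab, cb, cd, then bc, da, dc) of the
   images of the two relations in D(p)/J^3.  l and m are the factors by which
   the two relations are mapped to those of D(p), and D is the product of the
   determinants of the two arrow maps. *)
Lemma pq_of_fixed_arrows p q (aa ac ca cc bb bd db dd : K) :
    p != 0 -> q != 0 -> aa * cc - ac * ca != 0 -> bb * dd - bd * db != 0 ->
    (aa * bb - (aa + ca) * db) + (aa * bd - (aa + ca) * dd) = 0 ->
    ac * bb - (ac + cc) * db = 0 ->
    (ac * bd - (ac + cc) * dd) - (aa * bd - (aa + ca) * dd) = 0 ->
    bb * ac - q * db * cc = 0 -> bd * aa - q * dd * ca = 0 ->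
    p * (bb * aa - q * db * ca) + (bd * ac - q * dd * cc) = 0 ->
  p = q \/ p = q^-1.
Proof.
move=> p0 q0 detA detB.
set r1 := _ + _; set r2 := _ - _; set r3 := _ - _.
set r4 := _ - _; set r5 := _ - _; set r6 := _ + _ => e1 e2 e3 e4 e5 e6.
set l := aa * bb - (aa + ca) * db; set m := bb * aa - q * db * ca.
set D := (aa * cc - ac * ca) * (bb * dd - bd * db).
have D0 : D != 0 by rewrite mulf_neq0.
have l2 : l ^+ 2 = D.
  apply/subr0_eq; transitivity (l * r1 + l * r3 - (r1 - l) * r2).
    by rewrite /l /D /r1 /r2 /r3; ring.
  by rewrite e1 e2 e3; ring.
have m2 : p * m ^+ 2 = q * D.
  apply/subr0_eq; transitivity (m * r6 - r4 * r5).
    by rewrite /m /D /r4 /r5 /r6; ring.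
  by rewrite e4 e5 e6; ring.
apply: (pq_of_invariants p0 q0 D0 (or_introl (conj l2 m2))).
apply/subr0_eq; transitivity (l * r6 - (r1 - l) * r4 - r2 * r5 + (r3 + r1) * m).
  by rewrite /l /m /D /r1 /r2 /r3 /r4 /r5 /r6; ring.
by rewrite e1 e2 e3 e4 e5 e6; ring.
Qed.

Lemma pq_of_swapped_arrows p q (ab ad cb cd ba bc da dc : K) :
    p != 0 -> q != 0 -> ab * cd - ad * cb != 0 -> ba * dc - bc * da != 0 ->
    ab * bc - (ab + cb) * dc = 0 -> ad * ba - (ad + cd) * da = 0 ->
    p * (ab * ba - (ab + cb) * da) + (ad * bc - (ad + cd) * dc) = 0 ->
    (ba * ab - q * da * cb) + (ba * ad - q * da * cd) = 0 ->
    bc * ab - q * dc * cb = 0 ->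
    (bc * ad - q * dc * cd) - (ba * ad - q * da * cd) = 0 ->
  p = q \/ p = q^-1.
Proof.
move=> p0 q0 detA detB.
set r1 := _ - _; set r2 := _ - _; set r3 := _ + _.
set r4 := _ + _; set r5 := _ - _; set r6 := _ - _ => e1 e2 e3 e4 e5 e6.
set l := ab * ba - (ab + cb) * da; set m := ba * ab - q * da * cb.
set D := (ab * cd - ad * cb) * (ba * dc - bc * da).
have D0 : D != 0 by rewrite mulf_neq0.
have l2 : p * l ^+ 2 = D.
  apply/subr0_eq; transitivity (l * r3 - r1 * r2).
    by rewrite /l /D /r1 /r2 /r3; ring.
  by rewrite e1 e2 e3; ring.
have m2 : m ^+ 2 = q * D.
  apply/subr0_eq; transitivity (m * (r6 + r4) - (r4 - m) * r5).
    by rewrite /m /D /r4 /r5 /r6; ring.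
  by rewrite e4 e5 e6; ring.
apply: (pq_of_invariants p0 q0 D0 (or_intror (conj l2 m2))).
apply/subr0_eq; transitivity (l * (r6 + r4) - r1 * (r4 - m) - r2 * r5 + r3 * m).
  by rewrite /l /m /D /r1 /r2 /r3 /r4 /r5 /r6; ring.
by rewrite e1 e2 e3 e4 e5 e6; ring.
Qed.

End ScalarIdentities.

Section TwistedDerivationIdempotent.
Variables (K : fieldType) (R : lalgType K) (s1 s2 phi : R -> K).
Hypothesis phi_der : twisted_der s1 s2 phi.

Lemma twisted_der_compl e e' : e + e' = 1 -> phi e = 0 -> phi e' = 0.
Proof.
by case: phi_der => phiD _ _ phi1 ee' phie; move: phi1; rewrite -ee' phiD phie add0r.
Qed.

Lemma twisted_der_idem e : e * e = e -> s1 e = 0 -> s2 e = 0 ->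
  [/\ phi e = 0, forall x, phi (x * e) = 0 & forall x, phi (e * x) = 0].
Proof.
case: phi_der => _ _ phiM _ ee s1e s2e.
have phie : phi e = 0 by rewrite -ee phiM s1e s2e mul0r mulr0 addr0.
by split=> // x; rewrite phiM ?phie ?s1e ?s2e ?mul0r ?mulr0 ?addr0.
Qed.

End TwistedDerivationIdempotent.

Section TruncDerivations.
Variables (K : fieldType) (p : K).
Local Notation T := (Dtrunc p).

Definition der12 (u v w : K) (x : T) :=
  u * x_a x + v * x_c x + w * (x_e1 x - x_e2 x).

Definition der21 (u v w : K) (x : T) :=
  u * x_b x + v * x_d x + w * (x_e2 x - x_e1 x).

Lemma der12_twisted (u v w : K) : @twisted_der K T (@x_e1 K) (@x_e2 K) (der12 u v w).
Proof. by split; rewrite /der12; trunc_eval. Qed.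

Lemma der21_twisted (u v w : K) : @twisted_der K T (@x_e2 K) (@x_e1 K) (der21 u v w).
Proof. by split; rewrite /der21; trunc_eval. Qed.

End TruncDerivations.

Ltac trunc_coord f H :=
  move: (congr1 f H);
  rewrite ?(add_trE, opp_trE, mul_trE, scale_trE, one_trE, zero_trE);
  cbn [add_tr opp_tr scale_tr mul_tr zero_tr one_tr
       x_e1 x_e2 x_a x_c x_b x_d x_ab x_cb x_cd x_bc x_da x_dc];
  let e := fresh in move=> e; rewrite -e.

Section ArrowCorners.
Variables (K : fieldType) (p : K).
Local Notation T := (Dtrunc p).

Definition arrow12 (X : T) := [/\ x_e1 X = 0, x_e2 X = 0, x_b X = 0 & x_d X = 0].
Definition arrow21 (X : T) := [/\ x_e1 X = 0, x_e2 X = 0, x_a X = 0 & x_c X = 0].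

Lemma arrow12_of_corner (E F X : T) :
  x_e2 E = 0 -> x_e1 F = 0 -> E * X = X -> X * F = X -> arrow12 X.
Proof.
move=> E2 F1 EX XF.
have X1 : x_e1 X * x_e1 F = x_e1 X := congr1 (@x_e1 K) XF.
have X2 : x_e2 E * x_e2 X = x_e2 X := congr1 (@x_e2 K) EX.
have Xb : x_e2 E * x_b X + x_b E * x_e1 X = x_b X := congr1 (@x_b K) EX.
have Xd : x_e2 E * x_d X + x_d E * x_e1 X = x_d X := congr1 (@x_d K) EX.
rewrite F1 mulr0 in X1; rewrite E2 mul0r in X2.
by rewrite E2 -X1 !mulr0 !mul0r !addr0 in Xb Xd.
Qed.

Lemma arrow21_of_corner (E F X : T) :
  x_e1 E = 0 -> x_e2 F = 0 -> E * X = X -> X * F = X -> arrow21 X.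
Proof.
move=> E1 F2 EX XF.
have X1 : x_e1 E * x_e1 X = x_e1 X := congr1 (@x_e1 K) EX.
have X2 : x_e2 X * x_e2 F = x_e2 X := congr1 (@x_e2 K) XF.
have Xa : x_e1 E * x_a X + x_a E * x_e2 X = x_a X := congr1 (@x_a K) EX.
have Xc : x_e1 E * x_c X + x_c E * x_e2 X = x_c X := congr1 (@x_c K) EX.
rewrite E1 mul0r in X1; rewrite F2 mulr0 in X2.
by rewrite E1 -X2 !mulr0 !mul0r !addr0 in Xa Xc.
Qed.

Lemma pq_of_arrows12 q (A B C D : T) : p != 0 -> q != 0 ->
    arrow12 A -> arrow12 C -> arrow21 B -> arrow21 D ->
    x_a A * x_c C - x_c A * x_a C != 0 -> x_b B * x_d D - x_d B * x_b D != 0 ->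
    A * B - (A + C) * D = 0 -> B * A - q *: (D * C) = 0 ->
  p = q \/ p = q^-1.
Proof.
move=> p0 q0 [A1 A2 _ _] [C1 C2 _ _] [B1 B2 _ _] [D1 D2 _ _] AC BD rab rba.
apply: (pq_of_fixed_arrows p0 q0 AC BD);
  [ trunc_coord (@x_ab K) rab | trunc_coord (@x_cb K) rab
  | trunc_coord (@x_cd K) rab | trunc_coord (@x_bc K) rba
  | trunc_coord (@x_da K) rba | trunc_coord (@x_dc K) rba ];
  by rewrite ?A1 ?A2 ?B1 ?B2 ?C1 ?C2 ?D1 ?D2; ring.
Qed.

Lemma pq_of_arrows21 q (A B C D : T) : p != 0 -> q != 0 ->
    arrow21 A -> arrow21 C -> arrow12 B -> arrow12 D ->
    x_b A * x_d C - x_d A * x_b C != 0 -> x_a B * x_c D - x_c B * x_a D != 0 ->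
    A * B - (A + C) * D = 0 -> B * A - q *: (D * C) = 0 ->
  p = q \/ p = q^-1.
Proof.
move=> p0 q0 [A1 A2 _ _] [C1 C2 _ _] [B1 B2 _ _] [D1 D2 _ _] AC BD rab rba.
apply: (pq_of_swapped_arrows p0 q0 AC BD);
  [ trunc_coord (@x_bc K) rab | trunc_coord (@x_da K) rab
  | trunc_coord (@x_dc K) rab | trunc_coord (@x_ab K) rba
  | trunc_coord (@x_cb K) rba | trunc_coord (@x_cd K) rba ];
  by rewrite ?A1 ?A2 ?B1 ?B2 ?C1 ?C2 ?D1 ?D2; ring.
Qed.

End ArrowCorners.

Section QuiverImages.
Variables (K : fieldType) (p q : K) (E1 E2 A B C D : Dtrunc p).
Hypotheses (E1_idem : E1 * E1 = E1) (E2_idem : E2 * E2 = E2) (E_sum : E1 + E2 = 1).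
Hypotheses (E1A : E1 * A = A) (AE2 : A * E2 = A) (E1C : E1 * C = C) (CE2 : C * E2 = C).
Hypotheses (E2B : E2 * B = B) (BE1 : B * E1 = B) (E2D : E2 * D = D) (DE1 : D * E1 = D).
Hypotheses (relab : A * B - (A + C) * D = 0) (relba : B * A - q *: (D * C) = 0).
(* The images span the arrow spaces modulo J^2: no nonzero functional
   u x_a + v x_c (resp. u x_b + v x_d), corrected by a multiple of the vertex
   difference, vanishes on all of them. *)
Hypothesis spans12 : forall u v w,
  der12 u v w E1 = 0 -> der12 u v w E2 = 0 -> der12 u v w A = 0 ->
  der12 u v w B = 0 -> der12 u v w C = 0 -> der12 u v w D = 0 -> u = 0 /\ v = 0.
Hypothesis spans21 : forall u v w,
  der21 u v w E1 = 0 -> der21 u v w E2 = 0 -> der21 u v w A = 0 ->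
  der21 u v w B = 0 -> der21 u v w C = 0 -> der21 u v w D = 0 -> u = 0 /\ v = 0.

Let E_sumC : E2 + E1 = 1 := etrans (addrC _ _) E_sum.
Let E_sum1 : x_e1 E1 + x_e1 E2 = 1 := congr1 (@x_e1 K) E_sum.
Let E_sum2 : x_e2 E1 + x_e2 E2 = 1 := congr1 (@x_e2 K) E_sum.

Lemma vertex_cases : (x_e1 E1 = 1 /\ x_e2 E1 = 0) \/ (x_e1 E1 = 0 /\ x_e2 E1 = 1).
Proof.
have der := der12_twisted p 1 0 0.
have absurd : (1 : K) = 0 /\ (0 : K) = 0 -> False by move=> [/eqP]; rewrite oner_eq0.
have [v1 v2] : (x_e1 E1 = 0 \/ x_e1 E1 = 1) /\ (x_e2 E1 = 0 \/ x_e2 E1 = 1).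
  by split; apply: idemf01;
    [exact: (congr1 (@x_e1 K) E1_idem) | exact: (congr1 (@x_e2 K) E1_idem)].
(* An idempotent image with zero vertex part absorbs the images of all arrows
   on one side, so x_a vanishes on every image, against spans12. *)
case: v1 v2 => v1 [] v2; [exfalso | by right | by left | exfalso].
- have [d1 dXE dEX] := twisted_der_idem der E1_idem v1 v2.
  apply/absurd/(spans12 d1 (twisted_der_compl der E_sum d1)).
  + by rewrite -E1A dEX.
  + by rewrite -BE1 dXE.
  + by rewrite -E1C dEX.
  + by rewrite -DE1 dXE.
- have w1 : x_e1 E2 = 0 by apply: (addrI 1); rewrite -{1}v1 E_sum1 addr0.
  have w2 : x_e2 E2 = 0 by apply: (addrI 1); rewrite -{1}v2 E_sum2 addr0.
  have [d2 dXE dEX] := twisted_der_idem der E2_idem w1 w2.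
  apply/absurd/(spans12 (twisted_der_compl der E_sumC d2) d2).
  + by rewrite -AE2 dXE.
  + by rewrite -E2B dEX.
  + by rewrite -CE2 dXE.
  + by rewrite -E2D dEX.
Qed.

Lemma pq_of_fixed_vertices : p != 0 -> q != 0 ->
  x_e1 E1 = 1 -> x_e2 E1 = 0 -> p = q \/ p = q^-1.
Proof.
move=> p0 q0 v1 v2.
have w1 : x_e1 E2 = 0 by apply: (addrI 1); rewrite -{1}v1 E_sum1 addr0.
have w2 : x_e2 E2 = 1 by rewrite -E_sum2 v2 add0r.
have cA := arrow12_of_corner v2 w1 E1A AE2; have cC := arrow12_of_corner v2 w1 E1C CE2.
have cB := arrow21_of_corner w1 v2 E2B BE1; have cD := arrow21_of_corner w1 v2 E2D DE1.
apply: (pq_of_arrows12 p0 q0 cA cC cB cD _ _ relab relba).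
- apply: det2_neq0 => u v uvA uvC.
  set w := - (u * x_a E1 + v * x_c E1).
  have der := der12_twisted p u v w.
  have d1 : der12 u v w E1 = 0 by rewrite /der12 /w v1 v2; ring.
  apply: (spans12 d1 (twisted_der_compl der E_sum d1)); rewrite /der12.
  + by case: cA => -> -> _ _; rewrite subrr mulr0 addr0.
  + by case: cB => -> -> -> ->; ring.
  + by case: cC => -> -> _ _; rewrite subrr mulr0 addr0.
  + by case: cD => -> -> -> ->; ring.
- apply: det2_neq0 => u v uvB uvD.
  set w := - (u * x_b E2 + v * x_d E2).
  have der := der21_twisted p u v w.
  have d2 : der21 u v w E2 = 0 by rewrite /der21 /w w1 w2; ring.
  apply: (spans21 (twisted_der_compl der E_sumC d2) d2); rewrite /der21.
  + by case: cA => -> -> -> ->; ring.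
  + by case: cB => -> -> _ _; rewrite subrr mulr0 addr0.
  + by case: cC => -> -> -> ->; ring.
  + by case: cD => -> -> _ _; rewrite subrr mulr0 addr0.
Qed.

Lemma pq_of_swapped_vertices : p != 0 -> q != 0 ->
  x_e1 E1 = 0 -> x_e2 E1 = 1 -> p = q \/ p = q^-1.
Proof.
move=> p0 q0 v1 v2.
have w1 : x_e1 E2 = 1 by rewrite -E_sum1 v1 add0r.
have w2 : x_e2 E2 = 0 by apply: (addrI 1); rewrite -{1}v2 E_sum2 addr0.
have cA := arrow21_of_corner v1 w2 E1A AE2; have cC := arrow21_of_corner v1 w2 E1C CE2.
have cB := arrow12_of_corner w2 v1 E2B BE1; have cD := arrow12_of_corner w2 v1 E2D DE1.
apply: (pq_of_arrows21 p0 q0 cA cC cB cD _ _ relab relba).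
- apply: det2_neq0 => u v uvA uvC.
  set w := - (u * x_b E1 + v * x_d E1).
  have der := der21_twisted p u v w.
  have d1 : der21 u v w E1 = 0 by rewrite /der21 /w v1 v2; ring.
  apply: (spans21 d1 (twisted_der_compl der E_sum d1)); rewrite /der21.
  + by case: cA => -> -> _ _; rewrite subrr mulr0 addr0.
  + by case: cB => -> -> -> ->; ring.
  + by case: cC => -> -> _ _; rewrite subrr mulr0 addr0.
  + by case: cD => -> -> -> ->; ring.
- apply: det2_neq0 => u v uvB uvD.
  set w := - (u * x_a E2 + v * x_c E2).
  have der := der12_twisted p u v w.
  have d2 : der12 u v w E2 = 0 by rewrite /der12 /w w1 w2; ring.
  apply: (spans12 (twisted_der_compl der E_sumC d2) d2); rewrite /der12.
  + by case: cA => -> -> -> ->; ring.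
  + by case: cB => -> -> _ _; rewrite subrr mulr0 addr0.
  + by case: cC => -> -> -> ->; ring.
  + by case: cD => -> -> _ _; rewrite subrr mulr0 addr0.
Qed.

Lemma pq_of_quiver_images : p != 0 -> q != 0 -> p = q \/ p = q^-1.
Proof.
move=> p0 q0; case: vertex_cases => -[v1 v2].
  exact: pq_of_fixed_vertices.
exact: pq_of_swapped_vertices.
Qed.

End QuiverImages.

Section Rigidity.
Variables (K : fieldType) (p q : K) (h : FreeAlg K -> Dtrunc p).
Hypotheses (hh : alg_morph h) (h_ideal : forall x, D_ideal q x -> h x = 0).
Hypothesis h_onto : forall y, exists x, h x = trunc_proj p y.

Lemma image_rel_mul k x y z :
  (k < 15)%N -> (D_rels q)`_k = x * y - z -> h x * h y = h z.
Proof.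
move=> lt_k rel_k; apply/subr0_eq; rewrite -(alg_morph_mulB hh) -rel_k.
exact/h_ideal/in_ideal_rel.
Qed.

Lemma image_twisted_der (s1 s2 phi : Dtrunc p -> K) : twisted_der s1 s2 phi ->
  (forall i, phi (h (gen K i)) = 0) -> forall y, phi (trunc_proj p y) = 0.
Proof.
move=> der phi_gen y; have [x <-] := h_onto y.
exact: (alg_morph_twisted_der hh der).
Qed.

Lemma image_spans12 u v w :
  der12 u v w (h (ge1 K)) = 0 -> der12 u v w (h (ge2 K)) = 0 ->
  der12 u v w (h (ga K)) = 0 -> der12 u v w (h (gb K)) = 0 ->
  der12 u v w (h (gc K)) = 0 -> der12 u v w (h (gd K)) = 0 -> u = 0 /\ v = 0.
Proof.
move=> d1 d2 da db dc dd.
have van := image_twisted_der (der12_twisted p u v w)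
  (gen_ind (P := fun x => der12 u v w (h x) = 0) d1 d2 da db dc dd).
move: (van (ga K)) (van (gc K)); rewrite !trunc_proj_gen.
cbv [der12 trunc_gen nat_of_ord x_e1 x_e2 x_a x_c] => ea ec.
by split; [rewrite -ea | rewrite -ec]; ring.
Qed.

Lemma image_spans21 u v w :
  der21 u v w (h (ge1 K)) = 0 -> der21 u v w (h (ge2 K)) = 0 ->
  der21 u v w (h (ga K)) = 0 -> der21 u v w (h (gb K)) = 0 ->
  der21 u v w (h (gc K)) = 0 -> der21 u v w (h (gd K)) = 0 -> u = 0 /\ v = 0.
Proof.
move=> d1 d2 da db dc dd.
have van := image_twisted_der (der21_twisted p u v w)
  (gen_ind (P := fun x => der21 u v w (h x) = 0) d1 d2 da db dc dd).
move: (van (gb K)) (van (gd K)); rewrite !trunc_proj_gen.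
cbv [der21 trunc_gen nat_of_ord x_e1 x_e2 x_b x_d] => eb ed.
by split; [rewrite -eb | rewrite -ed]; ring.
Qed.

Lemma pq_of_surjection : p != 0 -> q != 0 -> p = q \/ p = q^-1.
Proof.
apply: (pq_of_quiver_images (image_rel_mul (k := 0) isT erefl)
  (image_rel_mul (k := 1) isT erefl) _ (image_rel_mul (k := 5) isT erefl)
  (image_rel_mul (k := 6) isT erefl) (image_rel_mul (k := 7) isT erefl)
  (image_rel_mul (k := 8) isT erefl) (image_rel_mul (k := 9) isT erefl)
  (image_rel_mul (k := 10) isT erefl) (image_rel_mul (k := 11) isT erefl)
  (image_rel_mul (k := 12) isT erefl) _ _ image_spans12 image_spans21).
- apply/subr0_eq; rewrite -(alg_morph_addB1 hh).
  exact/h_ideal/(in_ideal_rel (k := 4)).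
- by rewrite -(alg_morph_relab hh); exact/h_ideal/(in_ideal_rel (k := 13)).
- by rewrite -(alg_morph_relba hh); exact/h_ideal/(in_ideal_rel (k := 14)).
Qed.

End Rigidity.

Lemma pq_of_D_iso (K : fieldType) (p q : K) : p != 0 -> q != 0 ->
  D_iso q p -> p = q \/ p = q^-1.
Proof.
move=> p0 q0 [f [[fI fD fZ fM f1] [_ f_onto]]].
have [pD pZ pM p1] := trunc_proj_alg_morph p.
have piB := alg_morphB (trunc_proj_alg_morph p).
have proj_eq x y : D_ideal p (x - y) -> trunc_proj p x = trunc_proj p y.
  by move/trunc_proj_D_ideal; rewrite piB => /subr0_eq.
pose h x := trunc_proj p (f x).
have hh : alg_morph h.
  split=> [x y|k x|x y|]; rewrite /h.
  - by rewrite -pD; apply: proj_eq.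
  - by rewrite -pZ; apply: proj_eq.
  - by rewrite -pM; apply: proj_eq.
  - by rewrite -p1; apply: proj_eq.
have h0 : h 0 = 0 := alg_morph0 hh.
have h_ideal x : D_ideal q x -> h x = 0.
  by move=> Ix; rewrite -h0; apply/proj_eq/fI; rewrite subr0.
have h_onto y : exists x, h x = trunc_proj p y.
  by have [x fx] := f_onto y; exists x; apply: proj_eq.
exact: (pq_of_surjection hh h_ideal h_onto p0 q0).
Qed.

Theorem proposition3p9 (K : closedFieldType) (charK : [pchar K] =i pred0)
    (p q : K) (hp : p != 0) (hq : q != 0) :
  D_iso q p <-> (p = q \/ p = q^-1).
Proof.
split; first exact: pq_of_D_iso.
by case=> ->; [exact: D_iso_refl | exact: D_iso_inv].
Qed.
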